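(* Let $n\ge 1$, $h=1/(2n)$. Consider a fine grid on $\Omega^f=[0,1]\times[0,1]$ with points $((i-1)h,(j-1)h)$, $i=1,\dots,2n$ (periodic in $x$), where row $j=1$ lies on the interface $\Gamma=\{y=0\}$ (no ghost points are used on the fine side); and a coarse grid on $\Omega^c=[0,1]\times[-1,0]$ with points $(2(i-1)h,2(j-n)h)$, $i=1,\dots,n$ (periodic in $x$), where row $j=n$ lies on $\Gamma$ and $j=n+1$ is a row of ghost points. Let $(\boldsymbol u,\boldsymbol v)_h=h^2\sum_i\sum_j w^f_ju_{ij}v_{ij}$ and $(\boldsymbol u,\boldsymbol v)_{2h}=(2h)^2\sum_i\sum_j w^c_ju_{ij}v_{ij}$ be weighted inner products on the fine and coarse grids (weights positive; $w_1:=w^f_1$ is the weight of the interface row of the fine grid), and let $\langle\boldsymbol u_\Gamma,\boldsymbol v_\Gamma\rangle_h=h\sum_{i=1}^{2n}u_iv_i$, $\langle\boldsymbol u_\Gamma,\boldsymbol v_\Gamma\rangle_{2h}=2h\sum_{i=1}^n u_iv_i$. For a grid function $\boldsymbol u$, $\boldsymbol u_\Gamma$ (also written $\boldsymbol u|_\Gamma$) is its restriction to the interface row. Assume a linear operator $G_f(\mu)$ on fine grid functions (no ghost points) with a linear map $\boldsymbol v\mapsto\boldsymbol v'_\Gamma\in\mathbb R^{2n}$ such that $(\boldsymbol u,G_f(\mu)\boldsymbol v)_h=-S_f(\boldsymbol u,\boldsymbol v)-\langle\boldsymbol u_\Gamma,\boldsymbol v'_\Gamma\rangle_h$ for all $\boldsymbol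 u,\boldsymbol v$, and a linear operator $\widetilde G_c(\mu)$ on coarse grid functions with ghost points with a linear map $\widetilde{\boldsymbol v}\mapsto\widetilde{\boldsymbol v}'_\Gamma\in\mathbb R^n$ such that $(\boldsymbol u,\widetilde G_c(\mu)\widetilde{\boldsymbol v})_{2h}=-S_c(\boldsymbol u,\boldsymbol v)+\langle\boldsymbol u_\Gamma,\widetilde{\boldsymbol v}'_\Gamma\rangle_{2h}$ for all $\boldsymbol u,\widetilde{\boldsymbol v}$, where $S_f,S_c$ are symmetric positive semi-definite bilinear forms. Let $\boldsymbol\rho^f,\boldsymbol\rho^c$ be diagonal matrices with positive diagonal entries, and let $\mathcal P:\mathbb R^n\to\mathbb R^{2n}$ and $\mathcal R:\mathbb R^{2n}\to\mathbb R^n$ be linear maps with $\mathcal P=2\mathcal R^T$. Consider smooth time-dependent grid functions $\boldsymbol f(t)$ (fine) and $\widetilde{\boldsymbol c}(t)$ (coarse, with ghost points) satisfying, for all $t$: $\boldsymbol\rho^c\boldsymbol c_{tt}=\widetilde G_c(\mu)\widetilde{\boldsymbol c}$; $\boldsymbol f_{:,1}=\mathcal P(\boldsymbol c_{:,n})$; $(\boldsymbol\rho^f\boldsymbol f_{tt})_{:,1}=(G_f(\mu)\boldsymbol f)_{:,1}+\boldsymbol\eta$ and $(\boldsymbol\rho^f\boldsymbol f_{tt})_{:,j}=(G_f(\mu)\boldsymbol f)_{:,j}$ for $j\ge2$, where $\boldsymbol\eta=\boldsymbol\rho^f|_\Gamma\,\mathcal P\big((\boldsymbol\rho^c)^{-1}\widetilde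 G_c(\mu)\widetilde{\boldsymbol c}|_\Gamma\big)-G_f(\mu)\boldsymbol f|_\Gamma$; and $\widetilde{\boldsymbol c}'_\Gamma=\mathcal R\big(\boldsymbol f'_\Gamma-hw_1\boldsymbol\eta\big)$. Then $\frac{d}{dt}\left[(\boldsymbol f_t,\boldsymbol\rho^f\boldsymbol f_t)_h+S_f(\boldsymbol f,\boldsymbol f)+(\boldsymbol c_t,\boldsymbol\rho^c\boldsymbol c_t)_{2h}+S_c(\boldsymbol c,\boldsymbol c)\right]=0.$
   Context: This is the ''improved SBP-GP'' semi-discretization of the two-dimensional acoustic wave equation $\rho u_{tt}=\nabla\cdot(\mu\nabla u)$ across a 1:2 mesh refinement interface at $y=0$, with continuity of solution and normal flux imposed using only ghost points on the coarse side; periodic in $x$, and contributions from the outer boundaries are not included (as encoded in the assumed summation-by-parts identities). $\boldsymbol c$ denotes the restriction of $\widetilde{\boldsymbol c}$ to non-ghost points; colon notation $\boldsymbol f_{:,j}$ means the $j$-th row (all $i$); $\boldsymbol\rho^f|_\Gamma$ is the diagonal matrix of $\boldsymbol\rho^f$-entries on the interface row. In the paper $\boldsymbol v'_\Gamma$ has entries $\mu_{i,1}\boldsymbol b_1^T\boldsymbol v_{i,:}$, a boundary approximation of $\mu\,\partial_y v$. *)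

From HB Require Import structures.
From mathcomp Require Import all_boot all_order all_algebra.
From mathcomp Require Import all_classical all_reals all_analysis.
Set Implicit Arguments. Unset Strict Implicit. Unset Printing Implicit Defensive.
Import Order.TTheory GRing.Theory Num.Theory.
Local Open Scope ring_scope.

(* Grid functions are matrices M i j : i = x-index (periodic), j = y-index.
   Fine grid (no ghost points):  'M[R]_(2n, 2n+1), column j (0-based) is
     paper row j+1, y = j*h; column 0 is the interface Gamma.
   Coarse grid without ghosts: 'M[R]_(n, n+1), column j (0-based) is paper
     row j, y = 2(j-n)h; column n (= ord_max) is the interface Gamma.
   Coarse grid with ghosts: 'M[R]_(n, n+2), extra column n+1 = ghost row. *)

Section Grid.
Variable R : realType.

Definition hstep (n : nat) : R := ((n.*2)%:R)^-1.

Definition restr (n : nat) (v : 'M[R]_(n, n.+2)) : 'M[R]_(n, n.+1) :=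
  \matrix_(i, j) v i (widen_ord (leqnSn n.+1) j).

Definition fGamma (n : nat) (u : 'M[R]_(n.*2, (n.*2).+1)) : 'cV[R]_(n.*2) :=
  col ord0 u.
Definition cGamma (n : nat) (u : 'M[R]_(n, n.+1)) : 'cV[R]_n :=
  col ord_max u.

Definition ip_f (n : nat) (wf : 'I_(n.*2).+1 -> R) (u v : 'M[R]_(n.*2, (n.*2).+1)) : R :=
  hstep n ^+ 2 * \sum_i \sum_j wf j * u i j * v i j.
Definition ip_c (n : nat) (wc : 'I_n.+1 -> R) (u v : 'M[R]_(n, n.+1)) : R :=
  (2 * hstep n) ^+ 2 * \sum_i \sum_j wc j * u i j * v i j.
Definition bd_f (n : nat) (u v : 'cV[R]_(n.*2)) : R :=
  hstep n * \sum_i u i 0 * v i 0.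
Definition bd_c (n : nat) (u v : 'cV[R]_n) : R :=
  (2 * hstep n) * \sum_i u i 0 * v i 0.

(* action of a diagonal matrix (on grid points), given by its diagonal entries d *)
Definition dmul (m k : nat) (d u : 'M[R]_(m, k)) : 'M[R]_(m, k) :=
  \matrix_(i, j) (d i j * u i j).
Definition dinvmul (m k : nat) (d u : 'M[R]_(m, k)) : 'M[R]_(m, k) :=
  \matrix_(i, j) ((d i j)^-1 * u i j).

Definition sym_psd_bilinear (V : lmodType R) (S : V -> V -> R) : Prop :=
  [/\ (forall a u1 u2 v, S (a *: u1 + u2) v = a * S u1 v + S u2 v),
      (forall u v, S u v = S v u)
    & (forall u, 0 <= S u u)].

End Grid.

From HB Require Import structures.
From mathcomp Require Import all_boot all_order all_algebra.
From mathcomp Require Import all_classical all_reals all_analysis.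
From mathcomp Require Import ring.
Set Implicit Arguments. Unset Strict Implicit. Unset Printing Implicit Defensive.
Import Order.TTheory GRing.Theory Num.Theory.
Local Open Scope ring_scope.

(* The energy has derivative 2 [(f_t, rho^f f_tt)_h + S_f(f_t, f)
   + (c_t, rho^c c_tt)_2h + S_c(c_t, c)].  By the SBP identities the volume
   terms cancel the S-terms, leaving only interface terms.  On the fine side
   the forcing eta sits on the interface row, whose quadrature weight is
   h^2 w_1, so the fine interface term is -<f_t|Gamma, f'_Gamma - h w_1 eta>_h.
   On the coarse side it is <c_t|Gamma, R (f'_Gamma - h w_1 eta)>_2h, and
   P = 2 R^T turns this into <P c_t|Gamma, ...>_h = <f_t|Gamma, ...>_h, the
   last step by differentiating f|Gamma = P c|Gamma.  The two cancel. *)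

Section MatrixCurves.
Variables (R : realType) (m k : nat).
Implicit Types (g h : R -> 'M[R]_(m, k)) (L : 'M[R]_(m, k) -> R) (t : R).

Lemma is_derive_mx_entry g t i j :
  derivable g t 1 -> is_derive t (1 : R) (fun s => g s i j) ('D_1 g t i j).
Proof.
move=> dg; rewrite derive_mx // mxE; apply: derivableP.
exact: (derivable_mxP g t 1).1 dg i j.
Qed.

Lemma is_derive_sum_fun n (F : 'I_n -> R -> R) dF t :
  (forall i, is_derive t (1 : R) (F i) (dF i)) ->
  is_derive t (1 : R) (fun s => \sum_i F i s) (\sum_i dF i).
Proof. by move=> dF_F; rewrite -fct_sumE; exact: is_derive_sum. Qed.

Lemma scalar_sum_delta L : scalar L ->
  forall u, L u = \sum_i \sum_j u i j * L (delta_mx i j).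
Proof.
move=> L_scalar u.
pose Ll : {linear 'M[R]_(m, k) -> R | *%R} :=
  HB.pack L (GRing.isLinear.Build _ _ _ _ L L_scalar).
change L with (Ll : 'M[R]_(m, k) -> R).
rewrite [in LHS](matrix_sum_delta u) linear_sum.
by apply: eq_bigr => i _; rewrite linear_sum; apply: eq_bigr => j _; rewrite linearZ.
Qed.

Lemma is_derive_scalar L g t : scalar L -> derivable g t 1 ->
  is_derive t (1 : R) (fun s => L (g s)) (L ('D_1 g t)).
Proof.
move=> L_scalar dg; rewrite (scalar_sum_delta L_scalar).
under eq_fun do rewrite (scalar_sum_delta L_scalar).
apply: is_derive_sum_fun => i; apply: is_derive_sum_fun => j.
apply: is_derive_eq.
  exact: is_deriveM (is_derive_mx_entry i j dg) (is_derive_cst _ _ _).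
by rewrite scaler0 add0r mulrC.
Qed.

Lemma is_derive_bilinear (B : 'M[R]_(m, k) -> 'M[R]_(m, k) -> R) g h t :
  (forall v, scalar (B^~ v)) -> (forall u, scalar (B u)) ->
  derivable g t 1 -> derivable h t 1 ->
  is_derive t (1 : R) (fun s => B (g s) (h s))
    (B ('D_1 g t) (h t) + B (g t) ('D_1 h t)).
Proof.
move=> B_l B_r dg dh; under eq_fun do rewrite (scalar_sum_delta (B_l _)).
rewrite (scalar_sum_delta (B_l _) ('D_1 g t)) (scalar_sum_delta (B_l _) (g t)).
rewrite -big_split; apply: is_derive_sum_fun => i.
rewrite -big_split; apply: is_derive_sum_fun => j.
apply: is_derive_eq.
  exact: is_deriveM (is_derive_mx_entry i j dg) (is_derive_scalar (B_r _) dh).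
by rewrite addrC mulrC.
Qed.

Lemma is_derive_quadratic (B : 'M[R]_(m, k) -> 'M[R]_(m, k) -> R) g t :
  (forall v, scalar (B^~ v)) -> (forall u v, B u v = B v u) ->
  derivable g t 1 ->
  is_derive t (1 : R) (fun s => B (g s) (g s)) (B ('D_1 g t) (g t) *+ 2).
Proof.
move=> B_l B_sym dg.
have B_r u : scalar (B u) by move=> a v1 v2; rewrite !(B_sym u) B_l.
by apply: is_derive_eq; [exact: is_derive_bilinear | rewrite (B_sym (g t))].
Qed.

Lemma is_derive_linear p q (A : 'M[R]_(m, k) -> 'M[R]_(p, q)) g t :
  linear A -> derivable g t 1 ->
  is_derive t (1 : R) (fun s => A (g s)) (A ('D_1 g t)).
Proof.
move=> A_lin dg.
have A_entry i j : scalar (fun u => A u i j) by move=> a u v; rewrite A_lin !mxE.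
have dA_entry i j := is_derive_scalar (A_entry i j) dg.
have dAg : derivable (fun s => A (g s)) t 1.
  by apply/derivable_mxP => i j; case: (dA_entry i j).
split; first exact: dAg.
rewrite (derive_mx dAg).
have -> : A ('D_1 g t) = \matrix_(i, j) A ('D_1 g t) i j.
  by apply/matrixP => i j; rewrite mxE.
apply: eq_mx => i j; exact: derive_val.
Qed.

End MatrixCurves.

Lemma derive1_linear_eq (R : realType) m k m' k' p q
    (A : 'M[R]_(m, k) -> 'M[R]_(p, q)) (B : 'M[R]_(m', k') -> 'M[R]_(p, q))
    (g : R -> 'M[R]_(m, k)) (h : R -> 'M[R]_(m', k')) t :
  linear A -> linear B -> derivable g t 1 -> derivable h t 1 ->
  (forall s, A (g s) = B (h s)) -> A (derive1 g t) = B (derive1 h t).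
Proof.
move=> A_lin B_lin dg dh ABgh; rewrite !derive1E.
have [_ <-] := is_derive_linear A_lin dg.
have [_ <-] := is_derive_linear B_lin dh.
by congr ('D_1 _ t); apply/funext.
Qed.

Section Grid.
Variable R : realType.

Definition weighted_ip m k (c : R) (w : 'I_k -> R) (u v : 'M[R]_(m, k)) : R :=
  c * \sum_i \sum_j w j * u i j * v i j.

Lemma weighted_ip_scalar_l m k c w (v : 'M[R]_(m, k)) :
  scalar (weighted_ip c w ^~ v).
Proof.
move=> a u1 u2; rewrite /weighted_ip mulrCA -mulrDr; congr (_ * _).
rewrite big_distrr -big_split; apply: eq_bigr => i _; rewrite big_distrr -big_split.
by apply: eq_bigr => j _; rewrite !mxE /=; ring.
Qed.

Lemma weighted_ip_dmulC m k c w (d u v : 'M[R]_(m, k)) :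
  weighted_ip c w u (dmul d v) = weighted_ip c w v (dmul d u).
Proof.
congr (_ * _); apply: eq_bigr => i _; apply: eq_bigr => j _; rewrite !mxE; ring.
Qed.

Lemma is_derive_weighted_ip_dmul m k c w (d : 'M[R]_(m, k))
    (g : R -> 'M[R]_(m, k)) t :
  derivable g t 1 ->
  is_derive t (1 : R) (fun s => weighted_ip c w (g s) (dmul d (g s)))
    (weighted_ip c w (g t) (dmul d ('D_1 g t)) *+ 2).
Proof.
move=> dg; rewrite weighted_ip_dmulC.
apply: (is_derive_quadratic (B := fun u v => weighted_ip c w u (dmul d v))) => //.
  by move=> v; exact: weighted_ip_scalar_l.
exact: weighted_ip_dmulC.
Qed.

Lemma is_derive_sym_psd m k (S : 'M[R]_(m, k) -> 'M[R]_(m, k) -> R)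
    (g : R -> 'M[R]_(m, k)) t :
  sym_psd_bilinear S -> derivable g t 1 ->
  is_derive t (1 : R) (fun s => S (g s) (g s)) (S ('D_1 g t) (g t) *+ 2).
Proof.
by case=> S_l S_sym _ dg; apply: is_derive_quadratic => // v a u1 u2; exact: S_l.
Qed.

Definition pad_col0 {m k : nat} (x : 'cV[R]_m) : 'M[R]_(m, k.+1) :=
  \matrix_(i, j) (if j == ord0 then x i 0 else 0).

Lemma eq_add_pad_col0 m k (M N : 'M[R]_(m, k.+1)) x :
  col ord0 M = col ord0 N + x -> (forall j, j != ord0 -> col j M = col j N) ->
  M = N + pad_col0 x.
Proof.
move=> M0 Mj; apply/matrixP => i j; rewrite !mxE.
case: eqP => [->|/eqP j_neq0].
  by have /matrixP/(_ i 0) := M0; rewrite !mxE.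
by have /matrixP/(_ i 0) := Mj j j_neq0; rewrite !mxE addr0.
Qed.

Lemma ip_f_add_pad_col0 n wf (u M : 'M[R]_(n.*2, (n.*2).+1)) x :
  ip_f wf u (M + pad_col0 x) =
    ip_f wf u M + hstep R n * wf ord0 * bd_f (fGamma u) x.
Proof.
have row_split i : \sum_j wf j * u i j * (M + pad_col0 x) i j =
    \sum_j wf j * u i j * M i j + wf ord0 * u i ord0 * x i 0.
  rewrite (bigD1 ord0) //= [in RHS](bigD1 ord0) //= !mxE eqxx mulrDr [RHS]addrAC.
  congr (_ + _); apply: eq_bigr => j /negbTE j_neq0.
  by rewrite !mxE j_neq0 addr0.
rewrite /ip_f /bd_f; under eq_bigr do rewrite row_split.
rewrite big_split mulrDr /=; congr (_ + _).
rewrite !big_distrr; apply: eq_bigr => i _; rewrite !mxE /=; ring.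
Qed.

Lemma linear_fGamma n : linear (@fGamma R n).
Proof. exact: linearP. Qed.

Lemma linear_mulmx_cGamma n p (P : 'M[R]_(p, n)) :
  linear (fun v => P *m cGamma v).
Proof. by move=> a u v; rewrite /cGamma linearP mulmxDr scalemxAr. Qed.

Lemma bd_fBZ n (u v x : 'cV[R]_(n.*2)) a :
  bd_f u (v - a *: x) = bd_f u v - a * bd_f u x.
Proof.
rewrite /bd_f mulrCA -mulrBr; congr (_ * _).
rewrite big_distrr -sumrB.
by apply: eq_bigr => i _; rewrite !mxE /=; ring.
Qed.

Lemma bd_c_mulmx n (Rm : 'M[R]_(n, n.*2)) (x : 'cV[R]_n) v :
  bd_c x (Rm *m v) = bd_f ((2 *: Rm^T) *m x) v.
Proof.
rewrite /bd_c /bd_f [2 * _]mulrC -mulrA; congr (_ * _).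
rewrite big_distrr; under eq_bigr do rewrite mxE !big_distrr.
under [RHS]eq_bigr do rewrite mxE big_distrl.
rewrite exchange_big; apply: eq_bigr => i _; apply: eq_bigr => j _.
by rewrite !mxE /=; ring.
Qed.

End Grid.

Theorem mainTheorem2 (R : realType) (n : nat) (n_gt0 : (0 < n)%N)
  (wf : 'I_(n.*2).+1 -> R) (wc : 'I_n.+1 -> R)
  (wf_pos : forall j, 0 < wf j) (wc_pos : forall j, 0 < wc j)
  (Gf : {linear 'M[R]_(n.*2, (n.*2).+1) -> 'M[R]_(n.*2, (n.*2).+1)})
  (dF : {linear 'M[R]_(n.*2, (n.*2).+1) -> 'cV[R]_(n.*2)})
  (Gc : {linear 'M[R]_(n, n.+2) -> 'M[R]_(n, n.+1)})
  (dC : {linear 'M[R]_(n, n.+2) -> 'cV[R]_n})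
  (Sf : 'M[R]_(n.*2, (n.*2).+1) -> 'M[R]_(n.*2, (n.*2).+1) -> R)
  (Sc : 'M[R]_(n, n.+1) -> 'M[R]_(n, n.+1) -> R)
  (Sf_spd : sym_psd_bilinear Sf) (Sc_spd : sym_psd_bilinear Sc)
  (SBP_f : forall u v, ip_f wf u (Gf v) = - Sf u v - bd_f (fGamma u) (dF v))
  (SBP_c : forall u vt, ip_c wc u (Gc vt) = - Sc u (restr vt) + bd_c (cGamma u) (dC vt))
  (rf : 'M[R]_(n.*2, (n.*2).+1)) (rc : 'M[R]_(n, n.+1))
  (rf_pos : forall i j, 0 < rf i j) (rc_pos : forall i j, 0 < rc i j)
  (P : 'M[R]_(n.*2, n)) (Rm : 'M[R]_(n, n.*2)) (hPR : P = 2 *: Rm^T)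
  (f : R -> 'M[R]_(n.*2, (n.*2).+1)) (ct : R -> 'M[R]_(n, n.+2))
  (f_d1 : forall t, derivable f t 1) (f_d2 : forall t, derivable (derive1 f) t 1)
  (c_d1 : forall t, derivable (fun s => restr (ct s)) t 1)
  (c_d2 : forall t, derivable (derive1 (fun s => restr (ct s))) t 1) :
  let c := fun s => restr (ct s) in
  let eta := fun s =>
    dmul (fGamma rf) (P *m cGamma (dinvmul rc (Gc (ct s)))) - fGamma (Gf (f s)) in
  (forall t, dmul rc (derive1 (derive1 c) t) = Gc (ct t)) ->
  (forall t, fGamma (f t) = P *m cGamma (c t)) ->
  (forall t, fGamma (dmul rf (derive1 (derive1 f) t)) = fGamma (Gf (f t)) + eta t) ->
  (forall t (j : 'I_(n.*2).+1), j != ord0 ->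
      col j (dmul rf (derive1 (derive1 f) t)) = col j (Gf (f t))) ->
  (forall t, dC (ct t) = Rm *m (dF (f t) - (hstep R n * wf ord0) *: eta t)) ->
  forall t : R, is_derive t (1 : R)
    (fun s => ip_f wf ((derive1 f) s) (dmul rf ((derive1 f) s)) + Sf (f s) (f s)
            + ip_c wc (derive1 c s) (dmul rc (derive1 c s)) + Sc (c s) (c s)) 0.
Proof.
move=> c eta coarse_eq interface_eq fine_eq0 fine_eqj dC_eq t.
have f'_Gamma : fGamma (derive1 f t) = P *m cGamma (derive1 c t) :=
  derive1_linear_eq (@linear_fGamma _ n) (linear_mulmx_cGamma P) (f_d1 t) (c_d1 t)
    interface_eq.
pose flux := dF (f t) - (hstep R n * wf ord0) *: eta t.
have fine_rate : ip_f wf (derive1 f t) (dmul rf (derive1 (derive1 f) t)) =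
    - Sf (derive1 f t) (f t) - bd_f (fGamma (derive1 f t)) flux.
  rewrite (eq_add_pad_col0 (fine_eq0 t) (fine_eqj t)) ip_f_add_pad_col0 SBP_f.
  by rewrite /flux bd_fBZ; ring.
have coarse_rate : ip_c wc (derive1 c t) (dmul rc (derive1 (derive1 c) t)) =
    - Sc (derive1 c t) (c t) + bd_f (fGamma (derive1 f t)) flux.
  by rewrite coarse_eq SBP_c dC_eq bd_c_mulmx -hPR -f'_Gamma.
apply: is_derive_eq.
  apply: is_deriveD; [apply: is_deriveD; [apply: is_deriveD|]|].
  - exact: is_derive_weighted_ip_dmul (f_d2 t).
  - exact: is_derive_sym_psd Sf_spd (f_d1 t).
  - exact: is_derive_weighted_ip_dmul (c_d2 t).
  - exact: is_derive_sym_psd Sc_spd (c_d1 t).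
rewrite -!derive1E -/c.
change (weighted_ip (hstep R n ^+ 2) wf) with (ip_f wf).
change (weighted_ip ((2 * hstep R n) ^+ 2) wc) with (ip_c wc).
change (restr (ct t)) with (c t).
rewrite fine_rate coarse_rate; ring.
Qed.
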